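(* Let $a<b$, $\ell_3>0$, $R>0$ and $\epsilon=1/R$. Let $U(y,z)$ be a smooth real-valued function on $[a,b]\times\mathbb{R}$, $\ell_3$-periodic in $z$, and let $g=\max\{\|U_y\|_{L^\infty},\|U_z\|_{L^\infty}\}$. Let $k>0$ and $c=c_r+ic_i\in\mathbb{C}$, and suppose there are smooth functions $u,v,w,p$ on $[a,b]\times\mathbb{R}$, $\ell_3$-periodic in $z$, with $(u,v,w)$ not identically zero, such that \[ ik(U-c)u+vU_y+wU_z=-ikp+\epsilon(\Delta-k^2)u,\quad ik(U-c)v=-p_y+\epsilon(\Delta-k^2)v, \] \[ ik(U-c)w=-p_z+\epsilon(\Delta-k^2)w,\quad iku+v_y+w_z=0, \] with $u=v=w=0$ at $y=a$ and $y=b$. If $Rg<\min(k,k^3)$, then $c_i<0$ (the eigenvalue is stable).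
   Context: Here $\Delta=\partial_y^2+\partial_z^2$. The system is the linearized Navier–Stokes operator (Reynolds number $R$, no-slip walls at $y=a,b$, periodic in $x$ and $z$) about the shear $(U(y,z),0,0)$, for perturbations of the form $e^{ik(x-ct)}(u,v,w,p)(y,z)+\text{c.c.}$; $(k,c)$ is then called an eigenmode. *)

From Stdlib Require Import Reals List.
From Coquelicot Require Import Coquelicot.
Open Scope R_scope.

Definition pdy (f : R -> R -> R) : R -> R -> R :=
  fun y z => Derive (fun t => f t z) y.
Definition pdz (f : R -> R -> R) : R -> R -> R :=
  fun y z => Derive (fun t => f y t) z.

Fixpoint iterd (l : list bool) (f : R -> R -> R) : R -> R -> R :=
  match l with
  | nil => f
  | b :: l' => (if b then pdy else pdz) (iterd l' f)
  end.

Definition smooth2 (f : R -> R -> R) : Prop :=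
  forall (l : list bool) (y z : R),
    ex_derive (fun t => iterd l f t z) y /\
    ex_derive (fun t => iterd l f y t) z /\
    continuous (fun q : R * R => iterd l f (fst q) (snd q)) (y, z).

Definition csmooth2 (f : R -> R -> C) : Prop :=
  smooth2 (fun y z => Re (f y z)) /\ smooth2 (fun y z => Im (f y z)).

Definition cpdy (f : R -> R -> C) : R -> R -> C :=
  fun y z => (pdy (fun y z => Re (f y z)) y z, pdy (fun y z => Im (f y z)) y z).
Definition cpdz (f : R -> R -> C) : R -> R -> C :=
  fun y z => (pdz (fun y z => Re (f y z)) y z, pdz (fun y z => Im (f y z)) y z).

Definition clap (f : R -> R -> C) : R -> R -> C :=
  fun y z => Cplus (cpdy (cpdy f) y z) (cpdz (cpdz f) y z).

Definition zperiodic {T} (a b l : R) (f : R -> R -> T) : Prop :=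
  forall y z, a <= y <= b -> f y (z + l) = f y z.

Definition gradsup (a b : R) (U : R -> R -> R) : Rbar :=
  Lub_Rbar (fun r => exists y z, a <= y <= b /\
              (r = Rabs (pdy U y z) \/ r = Rabs (pdz U y z))).

From Stdlib Require Import Reals List Lra.
From Coquelicot Require Import Coquelicot.
Open Scope R_scope.

(* Write q = (u, v, w). Pairing the momentum equations with conj q and the
   continuity equation with conj p gives, pointwise,
     div S = k c_i |q|^2 + U_y Re(u conj v) + U_z Re(u conj w)
             + eps |grad q|^2 + eps k^2 |q|^2
   for the energy flux S = - Re(p conj q) + eps Re(conj q . grad q).
   Integrated over one period in z, the z-part of div S drops out, so
   Q(y) := \int S_y dz satisfies Q' >= (k c_i + eps k^2 - g) \int |q|^2 dz.
   If c_i >= 0 and R g < min(k, k^3) <= k^2, then Q' >= delta \int |q|^2 dz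
   with delta > 0. Hence Q is nondecreasing; it vanishes on both walls, so it
   is constant and Q' = 0 inside the channel. Then \int |q|^2 dz = 0 on every
   interior line, contradicting nontriviality. *)

(** * Real analysis *)

Lemma nondecreasing_of_derive_nonneg (f df : R -> R) (a b : R) :
  (forall y, a <= y <= b -> is_derive f y (df y)) ->
  (forall y, a <= y <= b -> 0 <= df y) ->
  forall x y, a <= x -> x <= y -> y <= b -> f x <= f y.
Proof.
  intros Hf Hdf x y Hax Hxy Hyb.
  destruct (Rle_lt_or_eq_dec x y Hxy) as [Hlt | <-]; [| lra].
  destruct (MVT_cor3 f df x y) as [t [Hxt [Hty ->]]]; [exact Hlt | |].
  - intros t Hxt Hty; apply is_derive_Reals, Hf; lra.
  - assert (0 <= df t) by (apply Hdf; lra); nra.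
Qed.

Lemma derive_eq0_of_nonneg_vanishing_ends (f df : R -> R) (a b y : R) :
  (forall t, a <= t <= b -> is_derive f t (df t)) ->
  (forall t, a <= t <= b -> 0 <= df t) ->
  f a = 0 -> f b = 0 -> a < y < b -> df y = 0.
Proof.
  intros Hf Hdf Ha Hb Hy.
  pose proof (nondecreasing_of_derive_nonneg f df a b Hf Hdf) as Hmono.
  assert (Hzero : forall t, a <= t <= b -> f t = 0).
  { intros t Ht.
    assert (f a <= f t) by (apply Hmono; lra).
    assert (f t <= f b) by (apply Hmono; lra).
    lra. }
  assert (Hd0 : is_derive f y 0).
  { apply (is_derive_ext_loc (fun _ => 0)).
    - assert (Hr : 0 < Rmin (y - a) (b - y)) by (apply Rmin_pos; lra).
      exists (mkposreal _ Hr); intros t Ht.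
      change (Rabs (t - y) < Rmin (y - a) (b - y)) in Ht.
      apply Rabs_def2 in Ht.
      pose proof (Rmin_l (y - a) (b - y)); pose proof (Rmin_r (y - a) (b - y)).
      symmetry; apply Hzero; lra.
    - apply (is_derive_const (K := R_AbsRing) (V := R_NormedModule)). }
  rewrite <- (is_derive_unique f y (df y)) by (apply Hf; lra).
  exact (is_derive_unique f y 0 Hd0).
Qed.

Lemma interior_of_not_at_ends (P : R -> Prop) (a b y : R) :
  ~ P a -> ~ P b -> a <= y <= b -> P y -> a < y < b.
Proof.
  intros Ha Hb [[Hay | <-] [Hyb | ->]] Hy; tauto.
Qed.

Lemma RInt_gt_0_of_pos_at_left (f : R -> R) (a b : R) : a < b ->
  (forall t, a <= t <= b -> continuous f t) ->
  (forall t, a <= t <= b -> 0 <= f t) -> 0 < f a -> 0 < RInt f a b.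
Proof.
  intros Hab Hc Hp Ha.
  assert (Hh : 0 < f a / 2) by lra.
  destruct (Hc a (conj (Rle_refl a) (Rlt_le _ _ Hab)) (ball (f a) (mkposreal _ Hh))
              (locally_ball _ _)) as [d Hd].
  pose proof (cond_pos d) as Hd0.
  set (m := Rmin (a + d / 2) b).
  assert (Hm : a < m <= b /\ m <= a + d / 2)
    by (unfold m, Rmin; destruct Rle_dec; lra).
  assert (Hex : forall x y, a <= x -> x <= y -> y <= b -> ex_RInt f x y).
  { intros x y H1 H2 H3. apply (@ex_RInt_continuous R_CompleteNormedModule).
    intros t Ht. apply Hc. rewrite Rmin_left in Ht by lra. rewrite Rmax_right in Ht by lra. lra. }
  rewrite <- (RInt_Chasles f a m b) by (apply Hex; lra).
  change (0 < RInt f a m + RInt f m b).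
  assert (0 < RInt f a m).
  { apply RInt_gt_0; [lra | | intros; apply Hc; lra].
    intros x Hx.
    assert (Hb : ball a d x) by (change (Rabs (x - a) < d); rewrite Rabs_right; lra).
    specialize (Hd x Hb). change (Rabs (f x - f a) < f a / 2) in Hd.
    apply Rabs_def2 in Hd. lra. }
  assert (0 <= RInt f m b).
  { apply RInt_ge_0; [lra | apply Hex; lra | intros; apply Hp; lra]. }
  lra.
Qed.

Lemma continuity_2d_pt_continuous_snd (F : R -> R -> R) (y z : R) :
  continuity_2d_pt F y z -> continuous (fun t => F y t) z.
Proof.
  intros H. apply continuity_2d_pt_filterlim in H.
  apply (continuous_comp_2 (fun _ : R => y) (fun t => t) F);
    [apply continuous_const | apply continuous_id | exact H].
Qed.

Lemma ex_RInt_continuity_2d_snd (F : R -> R -> R) (y z0 z1 : R) :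
  (forall z, continuity_2d_pt F y z) -> ex_RInt (fun t => F y t) z0 z1.
Proof.
  intros H. apply (@ex_RInt_continuous R_CompleteNormedModule).
  intros; apply continuity_2d_pt_continuous_snd, H.
Qed.

Lemma is_derive_RInt_param_2d (F DF : R -> R -> R) (z0 z1 y : R) :
  (forall y z, is_derive (fun t => F t z) y (DF y z)) ->
  (forall y z, continuity_2d_pt F y z) ->
  (forall y z, continuity_2d_pt DF y z) ->
  is_derive (fun y => RInt (fun t => F y t) z0 z1) y (RInt (fun t => DF y t) z0 z1).
Proof.
  intros Hd Hc Hdc.
  assert (E : forall y z, Derive (fun t => F t z) y = DF y z)
    by (intros; apply is_derive_unique, Hd).
  rewrite (RInt_ext (fun t => DF y t) (fun t => Derive (fun s => F s t) y))
    by (intros; rewrite E; reflexivity).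
  apply is_derive_RInt_param.
  - apply filter_forall. intros x t _. eexists. apply Hd.
  - intros t _. apply (continuity_2d_pt_ext DF); [intros; rewrite E; reflexivity | apply Hdc].
  - apply filter_forall. intros x. apply (ex_RInt_continuity_2d_snd F x), Hc.
Qed.

Lemma RInt_derive_snd (F DF : R -> R -> R) (y z0 z1 : R) :
  (forall z, is_derive (fun t => F y t) z (DF y z)) ->
  (forall z, continuity_2d_pt DF y z) ->
  RInt (fun t => DF y t) z0 z1 = F y z1 - F y z0.
Proof.
  intros Hd Hc. apply is_RInt_unique.
  apply (is_RInt_derive (fun t => F y t) (fun t => DF y t));
    intros; [apply Hd | apply continuity_2d_pt_continuous_snd, Hc].
Qed.

Lemma pdz_periodic (F : R -> R -> R) (l y z : R) :
  (forall t, F y (t + l) = F y t) -> (forall t, ex_derive (fun s => F y s) t) ->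
  pdz F y (z + l) = pdz F y z.
Proof.
  intros Hper Hd. unfold pdz.
  assert (Hshift : ex_derive (fun t => t + l) z) by (auto_derive; exact I).
  pose proof (Derive_comp (fun s => F y s) (fun t => t + l) z (Hd _) Hshift) as Hc.
  assert (Hd1 : Derive (fun t => t + l) z = 1)
    by (apply is_derive_unique; auto_derive; [exact I | ring]).
  cbv beta in Hc. rewrite Hd1, Rmult_1_l in Hc. rewrite <- Hc.
  apply Derive_ext. intros; apply Hper.
Qed.

Lemma smooth2_continuity_2d (f : R -> R -> R) (l : list bool) (y z : R) :
  smooth2 f -> continuity_2d_pt (iterd l f) y z.
Proof. intros H. apply continuity_2d_pt_filterlim, (H l y z). Qed.

Lemma smooth2_ex_derive_y (f : R -> R -> R) (l : list bool) (y z : R) :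
  smooth2 f -> ex_derive (fun t => iterd l f t z) y.
Proof. intros H. apply (H l y z). Qed.

Lemma smooth2_ex_derive_z (f : R -> R -> R) (l : list bool) (y z : R) :
  smooth2 f -> ex_derive (fun t => iterd l f y t) z.
Proof. intros H. apply (H l y z). Qed.

Lemma gradsup_bound (a b Rey K : R) (U : R -> R -> R) : a <= b -> 0 < Rey ->
  Rbar_lt (Rbar_mult (Finite Rey) (gradsup a b U)) (Finite K) ->
  exists g, 0 <= g /\ Rey * g < K /\
    forall y z, a <= y <= b -> Rabs (pdy U y z) <= g /\ Rabs (pdz U y z) <= g.
Proof.
  intros Hab HRey Hlt. unfold gradsup in Hlt.
  set (S := fun r => exists y z, a <= y <= b /\
              (r = Rabs (pdy U y z) \/ r = Rabs (pdz U y z))) in Hlt.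
  destruct (Lub_Rbar_correct S) as [Hub _].
  assert (HS : S (Rabs (pdy U a 0))) by (exists a, 0; split; [lra | left; reflexivity]).
  destruct (Lub_Rbar S) as [g | |].
  - exists g. pose proof (Hub _ HS) as Hg; simpl in Hg.
    split; [pose proof (Rabs_pos (pdy U a 0)); lra |]. split; [exact Hlt |].
    intros y z Hy. split; apply Hub; exists y, z; auto.
  - simpl in Hlt. destruct (Rle_dec 0 Rey) as [h | h]; [| lra].
    destruct (Rle_lt_or_eq_dec 0 Rey h); [destruct Hlt | lra].
  - destruct (Hub _ HS).
Qed.

(** * The energy identity *)

Definition fre (f : R -> R -> C) : R -> R -> R := fun y z => Re (f y z).
Definition fim (f : R -> R -> C) : R -> R -> R := fun y z => Im (f y z).

(* The system of [theorem4] at the point (y, z); the hypothesis of [theorem4]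
   unfolds to [forall y z, a <= y <= b -> lnse_at (/ Rey) k c U u v w p y z]. *)
Definition lnse_at (eps k : R) (c : C) (U : R -> R -> R) (u v w p : R -> R -> C)
    (y z : R) : Prop :=
  let ikUc := Cmult (Cmult Ci (RtoC k)) (Cminus (RtoC (U y z)) c) in
  Cplus (Cplus (Cmult ikUc (u y z)) (Cmult (v y z) (RtoC (pdy U y z))))
        (Cmult (w y z) (RtoC (pdz U y z)))
  = Cplus (Copp (Cmult (Cmult Ci (RtoC k)) (p y z)))
          (Cmult (RtoC eps) (Cminus (clap u y z) (Cmult (RtoC (k ^ 2)) (u y z))))
  /\
  Cmult ikUc (v y z)
  = Cplus (Copp (cpdy p y z))
          (Cmult (RtoC eps) (Cminus (clap v y z) (Cmult (RtoC (k ^ 2)) (v y z))))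
  /\
  Cmult ikUc (w y z)
  = Cplus (Copp (cpdz p y z))
          (Cmult (RtoC eps) (Cminus (clap w y z) (Cmult (RtoC (k ^ 2)) (w y z))))
  /\
  Cplus (Cplus (Cmult (Cmult Ci (RtoC k)) (u y z)) (cpdy v y z)) (cpdz w y z)
  = RtoC 0.

Definition energy (u v w : R -> R -> C) (y z : R) : R :=
  fre u y z * fre u y z + fim u y z * fim u y z
  + fre v y z * fre v y z + fim v y z * fim v y z
  + fre w y z * fre w y z + fim w y z * fim w y z.

Definition grad_energy (u v w : R -> R -> C) (y z : R) : R :=
  pdy (fre u) y z * pdy (fre u) y z + pdy (fim u) y z * pdy (fim u) y z
  + pdy (fre v) y z * pdy (fre v) y z + pdy (fim v) y z * pdy (fim v) y z
  + pdy (fre w) y z * pdy (fre w) y z + pdy (fim w) y z * pdy (fim w) y z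
  + pdz (fre u) y z * pdz (fre u) y z + pdz (fim u) y z * pdz (fim u) y z
  + pdz (fre v) y z * pdz (fre v) y z + pdz (fim v) y z * pdz (fim v) y z
  + pdz (fre w) y z * pdz (fre w) y z + pdz (fim w) y z * pdz (fim w) y z.

Definition production (U : R -> R -> R) (u v w : R -> R -> C) (y z : R) : R :=
  pdy U y z * (fre u y z * fre v y z + fim u y z * fim v y z)
  + pdz U y z * (fre u y z * fre w y z + fim u y z * fim w y z).

Definition flux_y (eps : R) (u v w p : R -> R -> C) (y z : R) : R :=
  - (fre p y z * fre v y z + fim p y z * fim v y z)
  + eps * (fre u y z * pdy (fre u) y z + fim u y z * pdy (fim u) y z
         + fre v y z * pdy (fre v) y z + fim v y z * pdy (fim v) y z
         + fre w y z * pdy (fre w) y z + fim w y z * pdy (fim w) y z).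

Definition flux_z (eps : R) (u v w p : R -> R -> C) (y z : R) : R :=
  - (fre p y z * fre w y z + fim p y z * fim w y z)
  + eps * (fre u y z * pdz (fre u) y z + fim u y z * pdz (fim u) y z
         + fre v y z * pdz (fre v) y z + fim v y z * pdz (fim v) y z
         + fre w y z * pdz (fre w) y z + fim w y z * pdz (fim w) y z).

Definition dflux_y (eps : R) (u v w p : R -> R -> C) (y z : R) : R :=
  - (pdy (fre p) y z * fre v y z + fre p y z * pdy (fre v) y z
     + pdy (fim p) y z * fim v y z + fim p y z * pdy (fim v) y z)
  + eps * (pdy (fre u) y z * pdy (fre u) y z + fre u y z * pdy (pdy (fre u)) y z
         + pdy (fim u) y z * pdy (fim u) y z + fim u y z * pdy (pdy (fim u)) y z
         + pdy (fre v) y z * pdy (fre v) y z + fre v y z * pdy (pdy (fre v)) y z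
         + pdy (fim v) y z * pdy (fim v) y z + fim v y z * pdy (pdy (fim v)) y z
         + pdy (fre w) y z * pdy (fre w) y z + fre w y z * pdy (pdy (fre w)) y z
         + pdy (fim w) y z * pdy (fim w) y z + fim w y z * pdy (pdy (fim w)) y z).

Definition dflux_z (eps : R) (u v w p : R -> R -> C) (y z : R) : R :=
  - (pdz (fre p) y z * fre w y z + fre p y z * pdz (fre w) y z
     + pdz (fim p) y z * fim w y z + fim p y z * pdz (fim w) y z)
  + eps * (pdz (fre u) y z * pdz (fre u) y z + fre u y z * pdz (pdz (fre u)) y z
         + pdz (fim u) y z * pdz (fim u) y z + fim u y z * pdz (pdz (fim u)) y z
         + pdz (fre v) y z * pdz (fre v) y z + fre v y z * pdz (pdz (fre v)) y z
         + pdz (fim v) y z * pdz (fim v) y z + fim v y z * pdz (pdz (fim v)) y z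
         + pdz (fre w) y z * pdz (fre w) y z + fre w y z * pdz (pdz (fre w)) y z
         + pdz (fim w) y z * pdz (fim w) y z + fim w y z * pdz (pdz (fim w)) y z).

Lemma energy_identity (eps k : R) (c : C) (U : R -> R -> R) (u v w p : R -> R -> C)
    (y z : R) :
  lnse_at eps k c U u v w p y z ->
  dflux_y eps u v w p y z + dflux_z eps u v w p y z
  = k * Im c * energy u v w y z + production U u v w y z
    + eps * grad_energy u v w y z + eps * k ^ 2 * energy u v w y z.
Proof.
  intros [Eu [Ev [Ew Ediv]]].
  apply (f_equal Re) in Eu as Eur; apply (f_equal Im) in Eu as Eui.
  apply (f_equal Re) in Ev as Evr; apply (f_equal Im) in Ev as Evi.
  apply (f_equal Re) in Ew as Ewr; apply (f_equal Im) in Ew as Ewi.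
  apply (f_equal Re) in Ediv as Edr; apply (f_equal Im) in Ediv as Edi.
  unfold dflux_y, dflux_z, energy, production, grad_energy, fre, fim.
  cbv [Re Im Cplus Cmult Copp Cminus RtoC Ci clap cpdy cpdz pdy pdz] in *.
  cbn [fst snd] in *.
  (* Real part of: momentum equations times conj u, conj v, conj w,
     continuity equation times conj p. *)
  apply (f_equal (fun t => fst (u y z) * t)) in Eur.
  apply (f_equal (fun t => snd (u y z) * t)) in Eui.
  apply (f_equal (fun t => fst (v y z) * t)) in Evr.
  apply (f_equal (fun t => snd (v y z) * t)) in Evi.
  apply (f_equal (fun t => fst (w y z) * t)) in Ewr.
  apply (f_equal (fun t => snd (w y z) * t)) in Ewi.
  apply (f_equal (fun t => fst (p y z) * t)) in Edr.
  apply (f_equal (fun t => snd (p y z) * t)) in Edi.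
  lra.
Qed.

Lemma energy_nonneg (u v w : R -> R -> C) (y z : R) : 0 <= energy u v w y z.
Proof. unfold energy; nra. Qed.

Lemma grad_energy_nonneg (u v w : R -> R -> C) (y z : R) : 0 <= grad_energy u v w y z.
Proof. unfold grad_energy; nra. Qed.

Lemma energy_pos (u v w : R -> R -> C) (y z : R) :
  u y z <> RtoC 0 \/ v y z <> RtoC 0 \/ w y z <> RtoC 0 -> 0 < energy u v w y z.
Proof.
  intros Hnz. destruct (Rle_lt_dec (energy u v w y z) 0) as [Hle | Hpos]; [exfalso | exact Hpos].
  unfold energy, fre, fim in Hle.
  assert (Hc : forall q : C, Re q * Re q + Im q * Im q = 0 -> q = RtoC 0).
  { intros [q1 q2] Hq; simpl in Hq; unfold RtoC; f_equal; nra. }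
  destruct Hnz as [H | [H | H]]; apply H, Hc; nra.
Qed.

Lemma abs_mult_le (G X g e : R) : Rabs G <= g -> Rabs X <= e -> - (g * e) <= G * X.
Proof.
  intros HG HX.
  assert (Rabs (G * X) <= g * e)
    by (rewrite Rabs_mult; apply Rmult_le_compat; auto; apply Rabs_pos).
  pose proof (Rle_abs (- (G * X))); rewrite Rabs_Ropp in *; lra.
Qed.

Lemma abs_dot2_le (a1 b1 a2 b2 : R) :
  Rabs (a1 * b1 + a2 * b2) <= (a1 * a1 + b1 * b1 + a2 * a2 + b2 * b2) / 2.
Proof.
  apply Rabs_le; split;
    [pose proof (Rle_0_sqr (a1 + b1)); pose proof (Rle_0_sqr (a2 + b2))
    | pose proof (Rle_0_sqr (a1 - b1)); pose proof (Rle_0_sqr (a2 - b2))];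
    unfold Rsqr in *; lra.
Qed.

Lemma production_lower_bound (U : R -> R -> R) (u v w : R -> R -> C) (y z g : R) :
  Rabs (pdy U y z) <= g -> Rabs (pdz U y z) <= g -> 0 <= g ->
  - (g * energy u v w y z) <= production U u v w y z.
Proof.
  intros Hy Hz Hg. unfold production, energy.
  pose proof (abs_mult_le _ _ _ _ Hy (abs_dot2_le (fre u y z) (fre v y z) (fim u y z) (fim v y z))).
  pose proof (abs_mult_le _ _ _ _ Hz (abs_dot2_le (fre u y z) (fre w y z) (fim u y z) (fim w y z))).
  nra.
Qed.

Lemma dflux_lower_bound (eps k g : R) (c : C) (U : R -> R -> R) (u v w p : R -> R -> C)
    (y z : R) :
  lnse_at eps k c U u v w p y z -> 0 <= k -> 0 <= Im c -> 0 <= eps -> 0 <= g ->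
  Rabs (pdy U y z) <= g -> Rabs (pdz U y z) <= g ->
  (eps * k ^ 2 - g) * energy u v w y z <= dflux_y eps u v w p y z + dflux_z eps u v w p y z.
Proof.
  intros Hns Hk Hc Heps Hg HUy HUz.
  rewrite (energy_identity eps k c U u v w p y z Hns).
  pose proof (production_lower_bound U u v w y z g HUy HUz Hg).
  pose proof (energy_nonneg u v w y z). pose proof (grad_energy_nonneg u v w y z).
  assert (0 <= k * Im c * energy u v w y z) by (apply Rmult_le_pos; [nra | auto]).
  assert (0 <= eps * grad_energy u v w y z) by nra.
  lra.
Qed.

(** * Integration over a period in z *)

Lemma csmooth2_re (f : R -> R -> C) : csmooth2 f -> smooth2 (fre f).
Proof. intros H; apply H. Qed.

Lemma csmooth2_im (f : R -> R -> C) : csmooth2 f -> smooth2 (fim f).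
Proof. intros H; apply H. Qed.

Ltac smooth_part :=
  lazymatch goal with
  | |- smooth2 (fre ?f) => apply (csmooth2_re f)
  | |- smooth2 (fim ?f) => apply (csmooth2_im f)
  end; assumption.

Ltac apply_smooth2 lem f :=
  lazymatch f with
  | pdy (pdy ?g) => apply (lem g (true :: true :: nil))
  | pdz (pdz ?g) => apply (lem g (false :: false :: nil))
  | pdy ?g => apply (lem g (true :: nil))
  | pdz ?g => apply (lem g (false :: nil))
  | ?g => apply (lem g nil)
  end; smooth_part.

Ltac continuity_2d_auto :=
  repeat match goal with
  | |- continuity_2d_pt (fun _ _ => _ + _) _ _ => apply continuity_2d_pt_plus
  | |- continuity_2d_pt (fun _ _ => _ * _) _ _ => apply continuity_2d_pt_mult
  | |- continuity_2d_pt (fun _ _ => - _) _ _ => apply continuity_2d_pt_opp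
  | |- continuity_2d_pt (fun _ _ => ?c) _ _ => apply continuity_2d_pt_const
  | |- continuity_2d_pt ?f _ _ => apply_smooth2 smooth2_continuity_2d f
  end.

Ltac ex_derive_auto :=
  repeat match goal with
  | |- _ /\ _ => split
  | |- True => exact I
  | |- ex_derive (fun t => ?f t _) _ => apply_smooth2 smooth2_ex_derive_y f
  | |- ex_derive (fun t => ?f _ t) _ => apply_smooth2 smooth2_ex_derive_z f
  end.

Section EnergyFlux.

Variables (u v w p : R -> R -> C).
Hypotheses (Hu : csmooth2 u) (Hv : csmooth2 v) (Hw : csmooth2 w) (Hp : csmooth2 p).
Variable eps : R.

Lemma is_derive_flux_y (y z : R) :
  is_derive (fun t => flux_y eps u v w p t z) y (dflux_y eps u v w p y z).
Proof.
  unfold flux_y, dflux_y. auto_derive.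
  - ex_derive_auto.
  - unfold pdy. ring.
Qed.

Lemma is_derive_flux_z (y z : R) :
  is_derive (fun t => flux_z eps u v w p y t) z (dflux_z eps u v w p y z).
Proof.
  unfold flux_z, dflux_z. auto_derive.
  - ex_derive_auto.
  - unfold pdz. ring.
Qed.

Lemma continuity_2d_flux_y (y z : R) : continuity_2d_pt (flux_y eps u v w p) y z.
Proof. unfold flux_y; continuity_2d_auto. Qed.

Lemma continuity_2d_dflux_y (y z : R) : continuity_2d_pt (dflux_y eps u v w p) y z.
Proof. unfold dflux_y; continuity_2d_auto. Qed.

Lemma continuity_2d_dflux_z (y z : R) : continuity_2d_pt (dflux_z eps u v w p) y z.
Proof. unfold dflux_z; continuity_2d_auto. Qed.

Lemma continuity_2d_energy (y z : R) : continuity_2d_pt (energy u v w) y z.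
Proof. unfold energy; continuity_2d_auto. Qed.

Lemma flux_z_periodic (a b l y z : R) :
  zperiodic a b l u -> zperiodic a b l v -> zperiodic a b l w -> zperiodic a b l p ->
  a <= y <= b -> flux_z eps u v w p y (z + l) = flux_z eps u v w p y z.
Proof.
  intros Hup Hvp Hwp Hpp Hy.
  assert (Hre : forall f : R -> R -> C, zperiodic a b l f -> forall t, fre f y (t + l) = fre f y t)
    by (intros f Hf t; unfold fre; rewrite Hf; auto).
  assert (Him : forall f : R -> R -> C, zperiodic a b l f -> forall t, fim f y (t + l) = fim f y t)
    by (intros f Hf t; unfold fim; rewrite Hf; auto).
  assert (Hdre : forall f, csmooth2 f -> zperiodic a b l f ->
                  pdz (fre f) y (z + l) = pdz (fre f) y z).
  { intros f Hf Hfp. apply pdz_periodic; [apply Hre, Hfp |].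
    intros; apply (smooth2_ex_derive_z (fre f) nil), csmooth2_re, Hf. }
  assert (Hdim : forall f, csmooth2 f -> zperiodic a b l f ->
                  pdz (fim f) y (z + l) = pdz (fim f) y z).
  { intros f Hf Hfp. apply pdz_periodic; [apply Him, Hfp |].
    intros; apply (smooth2_ex_derive_z (fim f) nil), csmooth2_im, Hf. }
  unfold flux_z.
  rewrite !Hre, !Him, !Hdre, !Hdim by assumption.
  reflexivity.
Qed.

Lemma is_derive_RInt_flux_y (z0 z1 y : R) :
  is_derive (fun y => RInt (fun z => flux_y eps u v w p y z) z0 z1) y
    (RInt (fun z => dflux_y eps u v w p y z) z0 z1).
Proof.
  apply is_derive_RInt_param_2d;
    [apply is_derive_flux_y | apply continuity_2d_flux_y | apply continuity_2d_dflux_y].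
Qed.

Lemma RInt_dflux_z (z0 z1 y : R) :
  RInt (fun z => dflux_z eps u v w p y z) z0 z1
  = flux_z eps u v w p y z1 - flux_z eps u v w p y z0.
Proof.
  apply RInt_derive_snd; [apply is_derive_flux_z | apply continuity_2d_dflux_z].
Qed.

Lemma RInt_dflux_y_lower_bound (a b l delta y z0 : R) :
  zperiodic a b l u -> zperiodic a b l v -> zperiodic a b l w -> zperiodic a b l p ->
  0 <= l -> a <= y <= b ->
  (forall z, delta * energy u v w y z <= dflux_y eps u v w p y z + dflux_z eps u v w p y z) ->
  delta * RInt (fun z => energy u v w y z) z0 (z0 + l)
  <= RInt (fun z => dflux_y eps u v w p y z) z0 (z0 + l).
Proof.
  intros Hup Hvp Hwp Hpp Hl Hy Hbound.
  assert (Hzflux : RInt (fun z => dflux_z eps u v w p y z) z0 (z0 + l) = 0).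
  { rewrite RInt_dflux_z, (flux_z_periodic a b) by assumption. apply Rminus_diag_eq; reflexivity. }
  assert (Hex : forall F : R -> R -> R, (forall y z, continuity_2d_pt F y z) ->
            ex_RInt (fun z => F y z) z0 (z0 + l))
    by (intros F HF; apply ex_RInt_continuity_2d_snd; intros; apply HF).
  assert (Hscal : RInt (fun z => delta * energy u v w y z) z0 (z0 + l)
                  = delta * RInt (fun z => energy u v w y z) z0 (z0 + l))
    by (apply (RInt_scal (V := R_CompleteNormedModule)), Hex, continuity_2d_energy).
  assert (Hsplit : RInt (fun z => dflux_y eps u v w p y z + dflux_z eps u v w p y z) z0 (z0 + l)
                   = RInt (fun z => dflux_y eps u v w p y z) z0 (z0 + l)
                     + RInt (fun z => dflux_z eps u v w p y z) z0 (z0 + l)).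
  { apply (RInt_plus (V := R_CompleteNormedModule));
      apply Hex; intros; [apply continuity_2d_dflux_y | apply continuity_2d_dflux_z]. }
  apply (Rle_trans _ (RInt (fun z => dflux_y eps u v w p y z + dflux_z eps u v w p y z)
                         z0 (z0 + l))).
  - rewrite <- Hscal. apply RInt_le; [lra | | | intros; apply Hbound].
    + apply (Hex (fun y z => delta * energy u v w y z)); intros.
      apply continuity_2d_pt_mult; [apply continuity_2d_pt_const | apply continuity_2d_energy].
    + apply (Hex (fun y z => dflux_y eps u v w p y z + dflux_z eps u v w p y z)); intros.
      apply continuity_2d_pt_plus; [apply continuity_2d_dflux_y | apply continuity_2d_dflux_z].
  - rewrite Hsplit, Hzflux. lra.
Qed.

Lemma RInt_energy_nonneg (y z0 z1 : R) : z0 <= z1 ->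
  0 <= RInt (fun z => energy u v w y z) z0 z1.
Proof.
  intros Hz. apply RInt_ge_0; [exact Hz | | intros; apply energy_nonneg].
  apply ex_RInt_continuity_2d_snd; intros; apply continuity_2d_energy.
Qed.

Lemma RInt_energy_pos (y z0 l : R) : 0 < l ->
  u y z0 <> RtoC 0 \/ v y z0 <> RtoC 0 \/ w y z0 <> RtoC 0 ->
  0 < RInt (fun z => energy u v w y z) z0 (z0 + l).
Proof.
  intros Hl Hnz. apply RInt_gt_0_of_pos_at_left; [lra | | | apply energy_pos, Hnz].
  - intros; apply continuity_2d_pt_continuous_snd, continuity_2d_energy.
  - intros; apply energy_nonneg.
Qed.

End EnergyFlux.

Lemma RInt_flux_y_wall (eps : R) (u v w p : R -> R -> C) (y z0 z1 : R) :
  (forall z, u y z = RtoC 0 /\ v y z = RtoC 0 /\ w y z = RtoC 0) ->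
  RInt (fun z => flux_y eps u v w p y z) z0 z1 = 0.
Proof.
  intros Hwall.
  rewrite (RInt_ext _ (fun _ => 0)) by
    (intros z _; unfold flux_y, fre, fim; destruct (Hwall z) as [-> [-> ->]]; simpl; ring).
  rewrite RInt_const. apply Rmult_0_r.
Qed.

Lemma viscous_margin_pos (Rey k g : R) : 0 < Rey -> 0 < k ->
  Rey * g < Rmin k (k ^ 3) -> 0 < / Rey * k ^ 2 - g.
Proof.
  intros HRey Hk Hg.
  assert (Rmin k (k ^ 3) <= k ^ 2) by (unfold Rmin; destruct Rle_dec; nra).
  apply (Rmult_lt_reg_l Rey); [exact HRey |].
  field_simplify; lra.
Qed.

Theorem theorem4
  (a b l3 Rey : R) (U : R -> R -> R) (k : R) (c : C)
  (u v w p : R -> R -> C) :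
  a < b -> 0 < l3 -> 0 < Rey ->
  smooth2 U -> zperiodic a b l3 U ->
  0 < k ->
  csmooth2 u -> csmooth2 v -> csmooth2 w -> csmooth2 p ->
  zperiodic a b l3 u -> zperiodic a b l3 v ->
  zperiodic a b l3 w -> zperiodic a b l3 p ->
  (exists y z, a <= y <= b /\ (u y z <> RtoC 0 \/ v y z <> RtoC 0 \/ w y z <> RtoC 0)) ->
  (forall y z, a <= y <= b ->
     let eps := / Rey in
     let ikUc := Cmult (Cmult Ci (RtoC k)) (Cminus (RtoC (U y z)) c) in
     Cplus (Cplus (Cmult ikUc (u y z)) (Cmult (v y z) (RtoC (pdy U y z))))
           (Cmult (w y z) (RtoC (pdz U y z)))
     = Cplus (Copp (Cmult (Cmult Ci (RtoC k)) (p y z)))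
             (Cmult (RtoC eps) (Cminus (clap u y z) (Cmult (RtoC (k ^ 2)) (u y z))))
     /\
     Cmult ikUc (v y z)
     = Cplus (Copp (cpdy p y z))
             (Cmult (RtoC eps) (Cminus (clap v y z) (Cmult (RtoC (k ^ 2)) (v y z))))
     /\
     Cmult ikUc (w y z)
     = Cplus (Copp (cpdz p y z))
             (Cmult (RtoC eps) (Cminus (clap w y z) (Cmult (RtoC (k ^ 2)) (w y z))))
     /\
     Cplus (Cplus (Cmult (Cmult Ci (RtoC k)) (u y z)) (cpdy v y z)) (cpdz w y z)
     = RtoC 0) ->
  (forall z, u a z = RtoC 0 /\ v a z = RtoC 0 /\ w a z = RtoC 0) ->
  (forall z, u b z = RtoC 0 /\ v b z = RtoC 0 /\ w b z = RtoC 0) ->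
  Rbar_lt (Rbar_mult (Finite Rey) (gradsup a b U)) (Finite (Rmin k (k ^ 3))) ->
  Im c < 0.
Proof.
  (* U enters only through the bound g on its gradient. *)
  intros Hab Hl3 HRey _ _ Hk Hu Hv Hw Hp Hup Hvp Hwp Hpp [y0 [z0 [Hy0 Hnz]]] Hns Ha Hb Hg.
  destruct (Rlt_or_le (Im c) 0) as [Hci | Hci]; [exact Hci | exfalso].
  destruct (gradsup_bound a b Rey _ U (Rlt_le _ _ Hab) HRey Hg) as [g [Hg0 [HRg HUg]]].
  set (eps := / Rey).
  assert (Heps : 0 < eps) by (apply Rinv_0_lt_compat, HRey).
  set (delta := eps * k ^ 2 - g).
  assert (Hdelta : 0 < delta) by (apply viscous_margin_pos; assumption).
  set (DQ := fun y => RInt (fun z => dflux_y eps u v w p y z) z0 (z0 + l3)).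
  set (A := fun y => RInt (fun z => energy u v w y z) z0 (z0 + l3)).
  assert (HDQ : forall y, a <= y <= b -> delta * A y <= DQ y).
  { intros y Hy. apply (RInt_dflux_y_lower_bound u v w p Hu Hv Hw Hp eps a b); auto; [lra |].
    intros z. destruct (HUg y z Hy) as [HUy HUz].
    apply (dflux_lower_bound eps k g c U); [exact (Hns y z Hy) | lra .. | exact HUy | exact HUz]. }
  assert (HA : forall y, 0 <= A y) by (intros; apply RInt_energy_nonneg; auto; lra).
  assert (HDQ0 : DQ y0 = 0).
  { apply (derive_eq0_of_nonneg_vanishing_ends
             (fun y => RInt (fun z => flux_y eps u v w p y z) z0 (z0 + l3)) DQ a b).
    - intros; apply is_derive_RInt_flux_y; auto.
    - intros y Hy. pose proof (HDQ y Hy). pose proof (HA y). nra.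
    - apply RInt_flux_y_wall, Ha.
    - apply RInt_flux_y_wall, Hb.
    - apply (interior_of_not_at_ends (fun y => u y z0 <> RtoC 0 \/ v y z0 <> RtoC 0 \/ w y z0 <> RtoC 0));
        auto; [destruct (Ha z0) | destruct (Hb z0)]; tauto. }
  pose proof (HDQ y0 Hy0). pose proof (RInt_energy_pos u v w Hu Hv Hw y0 z0 l3 Hl3 Hnz).
  unfold A in *. nra.
Qed.
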